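(* Let $X$ be a Baire space, $Y$ a topological space, $(Z,d)$ a metric space and $f:X\times Y\to Z$ a mapping. Let $b\in Y$ have a countable neighborhood base in $Y$. Suppose $f^y$ is quasicontinuous for every $y\in Y$, and $f_x$ is continuous at $b$ for every $x$ in a given dense Baire subspace $Q$ of $X$. Then: (1) $f$ is quasicontinuous with respect to the variable $y$ at each point of $X\times\{b\}$; (2) the set of all $x\in X$ such that $f$ is continuous at $(x,b)$ is residual in $X$.
   Context: $f_x(y)=f^y(x)=f(x,y)$. A mapping $g:X\to Z$ is quasicontinuous at $a$ if for each neighborhood $U$ of $a$ and neighborhood $W$ of $g(a)$ there is an open $O$ with $\emptyset\ne O\subset U$ and $g(O)\subset W$; quasicontinuous means at every point. $f$ is quasicontinuous with respect to the variable $y$ at $(a,b)$ if for each neighborhood $U$ of $a$ in $X$ and each $\varepsilon>0$ there are a neighborhood $V$ of $b$ in $Y$ and an open $O\subset X$ with $\emptyset\ne O\subset U$ such that $d(f(a,b),f(x,y))\le\varepsilon$ for all $x\in O$, $y\in V$. Residual means containing a countable intersection of dense open sets. *)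

From Stdlib Require Import Reals.
Open Scope R_scope.

Set Implicit Arguments.

Record topology (T : Type) := Topology {
  open : (T -> Prop) -> Prop;
  open_full : open (fun _ => True);
  open_inter : forall U V, open U -> open V -> open (fun x => U x /\ V x);
  open_union : forall F : (T -> Prop) -> Prop,
      (forall U, F U -> open U) -> open (fun x => exists U, F U /\ U x)
}.

Definition nbhd {T} (t : topology T) (a : T) (N : T -> Prop) : Prop :=
  exists U, open t U /\ U a /\ forall x, U x -> N x.

Definition dense {T} (t : topology T) (D : T -> Prop) : Prop :=
  forall U, open t U -> (exists x, U x) -> exists x, U x /\ D x.

Definition baire {T} (t : topology T) : Prop :=
  forall G : nat -> T -> Prop,
    (forall n, open t (G n)) -> (forall n, dense t (G n)) ->
    dense t (fun x => forall n, G n x).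

Definition residual {T} (t : topology T) (S : T -> Prop) : Prop :=
  exists G : nat -> T -> Prop,
    (forall n, open t (G n)) /\ (forall n, dense t (G n)) /\
    (forall x, (forall n, G n x) -> S x).

Definition countable_nbhd_base {T} (t : topology T) (b : T) : Prop :=
  exists B : nat -> T -> Prop,
    (forall n, nbhd t b (B n)) /\
    (forall N, nbhd t b N -> exists n, forall y, B n y -> N y).

Section Subspace.
Variables (T : Type) (t : topology T) (Q : T -> Prop).

Definition sub_open (S : {x | Q x} -> Prop) : Prop :=
  exists U, open t U /\ forall z, S z <-> U (proj1_sig z).

Lemma sub_open_full : sub_open (fun _ => True).
Proof. exists (fun _ => True); split; [apply open_full | tauto]. Qed.

Lemma sub_open_inter : forall U V, sub_open U -> sub_open V ->
  sub_open (fun x => U x /\ V x).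
Proof.
  intros U V [U' [HU' EU]] [V' [HV' EV]].
  exists (fun x => U' x /\ V' x); split; [apply open_inter; assumption|].
  intro z; rewrite EU, EV; tauto.
Qed.

Lemma sub_open_union : forall F : ({x | Q x} -> Prop) -> Prop,
  (forall U, F U -> sub_open U) -> sub_open (fun x => exists U, F U /\ U x).
Proof.
  intros F HF.
  exists (fun y => exists U, (open t U /\
            (forall z : {x | Q x}, U (proj1_sig z) -> exists S, F S /\ S z)) /\ U y).
  split.
  - apply open_union. intros U [H _]; exact H.
  - intro z; split.
    + intros [S [FS Sz]]. destruct (HF S FS) as [U [HU EU]].
      exists U; split; [split; [exact HU|] | apply EU; exact Sz].
      intros w Uw; exists S; split; [exact FS | apply EU; exact Uw].
    + intros [U [[_ HU] Uz]]. exact (HU z Uz).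
Qed.

Definition subspace : topology {x | Q x} :=
  Topology sub_open sub_open_full sub_open_inter sub_open_union.
End Subspace.

Record metric (Z : Type) := Metric {
  dist : Z -> Z -> R;
  dist_nonneg : forall x y, 0 <= dist x y;
  dist_eq0 : forall x y, dist x y = 0 <-> x = y;
  dist_sym : forall x y, dist x y = dist y x;
  dist_tri : forall x y z, dist x z <= dist x y + dist y z
}.

Definition mnbhd {Z} (m : metric Z) (z : Z) (W : Z -> Prop) : Prop :=
  exists eps, 0 < eps /\ forall w, dist m z w < eps -> W w.

Definition quasicontinuous_at {X Z} (tX : topology X) (m : metric Z)
    (g : X -> Z) (a : X) : Prop :=
  forall U W, nbhd tX a U -> mnbhd m (g a) W ->
    exists O, open tX O /\ (exists x, O x) /\
      (forall x, O x -> U x) /\ (forall x, O x -> W (g x)).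

Definition quasicontinuous {X Z} (tX : topology X) (m : metric Z)
    (g : X -> Z) : Prop :=
  forall a, quasicontinuous_at tX m g a.

Definition continuous_at {Y Z} (tY : topology Y) (m : metric Z)
    (h : Y -> Z) (b : Y) : Prop :=
  forall W, mnbhd m (h b) W ->
    exists V, nbhd tY b V /\ forall y, V y -> W (h y).

Definition continuous_at2 {X Y Z} (tX : topology X) (tY : topology Y)
    (m : metric Z) (f : X -> Y -> Z) (a : X) (b : Y) : Prop :=
  forall W, mnbhd m (f a b) W ->
    exists U V, nbhd tX a U /\ nbhd tY b V /\
      forall x y, U x -> V y -> W (f x y).

Definition quasicontinuous_wrt_y {X Y Z} (tX : topology X) (tY : topology Y)
    (m : metric Z) (f : X -> Y -> Z) (a : X) (b : Y) : Prop :=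
  forall U eps, nbhd tX a U -> 0 < eps ->
    exists V O, nbhd tY b V /\ open tX O /\ (exists x, O x) /\
      (forall x, O x -> U x) /\
      (forall x y, O x -> V y -> dist m (f a b) (f x y) <= eps).

(* Fix a ∈ X.  By quasicontinuity of f^b, f(·,b) stays close to f(a,b) on a nonempty
   open set O₁ near a.  Each x ∈ Q ∩ O₁ has, by continuity of f_x at b, an index n
   of the countable base (B n) at b on which f(x,·) stays close to f(x,b).  Grouping
   the points of Q ∩ O₁ by n gives countably many sets covering Q ∩ O₁; since Q is
   Baire, one of them, A n, is dense in some nonempty open G ⊆ O₁.
   Quasicontinuity of each f^y then propagates the estimate from A n to all of G,
   which gives (1).  For (2), (1) makes the sets of points of oscillation ≤ 1/(k+1)
   at (·,b) dense; they are open, and their intersection consists of points of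
   continuity at (·,b). *)

From Stdlib Require Import Reals Lra Classical.
Open Scope R_scope.

Set Implicit Arguments.

Section SomewhereDense.
Variables (T : Type) (t : topology T).

Definition dense_in (G A : T -> Prop) : Prop :=
  forall O, open t O -> (forall x, O x -> G x) -> (exists x, O x) ->
    exists x, O x /\ A x.

Lemma baire_cover_somewhere_dense (O : T -> Prop) (A : nat -> T -> Prop) :
  baire t -> open t O -> (exists x, O x) -> (forall x, O x -> exists n, A n x) ->
  exists n G, open t G /\ (exists x, G x) /\ (forall x, G x -> O x) /\
    dense_in G (A n).
Proof.
  intros Hbaire HO HOne Hcov.
  apply NNPP; intro Hnone.
  (* the exterior of [A n ∩ O]; it is dense exactly because no [A n] is dense in
     a nonempty open subset of [O] *)
  set (Ext := fun n x => exists O',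
         (open t O' /\ forall y, O' y -> O y -> A n y -> False) /\ O' x).
  assert (Ext_open : forall n, open t (Ext n)).
  { intro n; apply open_union; intros O' [HO' _]; exact HO'. }
  assert (Ext_dense : forall n, dense t (Ext n)).
  { intros n S HS [x Sx].
    destruct (classic (exists x, S x /\ O x)) as [HSO | HSO].
    - apply NNPP; intro Hmiss.
      apply Hnone; exists n, (fun x => S x /\ O x).
      split; [now apply open_inter |].
      split; [exact HSO |].
      split; [now intros y [] |].
      intros O' HO' HO'SO [y O'y]; apply NNPP; intro Hdisj.
      apply Hmiss; exists y; split; [now apply HO'SO |].
      exists O'; split; [| exact O'y]; split; [exact HO' |].
      intros w O'w _ Aw; apply Hdisj; now exists w.
    - exists x; split; [exact Sx |].
      exists S; split; [| exact Sx]; split; [exact HS |].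
      intros y Sy Oy _; apply HSO; now exists y. }
  destruct (Hbaire Ext Ext_open Ext_dense O HO HOne) as [x [Ox Hx]].
  destruct (Hcov x Ox) as [n Anx].
  destruct (Hx n) as [O' [[_ Hdisj] O'x]].
  exact (Hdisj x O'x Ox Anx).
Qed.

End SomewhereDense.

Lemma baire_subspace_cover_somewhere_dense (T : Type) (t : topology T)
    (Q O : T -> Prop) (A : nat -> T -> Prop) :
  dense t Q -> baire (subspace t Q) -> open t O -> (exists x, O x) ->
  (forall x, Q x -> O x -> exists n, A n x) ->
  exists n G, open t G /\ (exists x, G x) /\ (forall x, G x -> O x) /\
    dense_in t G (A n).
Proof.
  intros HQ HbQ HO HOne Hcov.
  destruct (baire_cover_somewhere_dense (fun z => O (proj1_sig z))
              (fun n z => A n (proj1_sig z)) HbQ)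
    as [n [G' [[U [HU EU]] [[z G'z] [HG'O HG'A]]]]].
  - exists O; split; [exact HO | tauto].
  - destruct (HQ O HO HOne) as [x [Ox Qx]]; now exists (exist _ x Qx).
  - intros [x Qx] Ox; exact (Hcov x Qx Ox).
  - exists n, (fun x => U x /\ O x).
    split; [now apply open_inter |].
    split; [exists (proj1_sig z); split; [now apply EU | now apply HG'O] |].
    split; [now intros x [] |].
    intros O' HO' HO'G [x O'x].
    destruct (HQ O' HO' (ex_intro _ x O'x)) as [x' [O'x' Qx']].
    destruct (HG'A (fun z => O' (proj1_sig z))) as [[y Qy] [O'y Ay]].
    + exists O'; split; [exact HO' | tauto].
    + intros [y Qy] O'y; apply EU, (HO'G y O'y).
    + now exists (exist _ x' Qx').
    + now exists y.
Qed.

Lemma quasicontinuous_at_dist_le (X Z : Type) (tX : topology X) (m : metric Z)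
    (g : X -> Z) (G A : X -> Prop) (c : Z) (r : R) (x : X) :
  quasicontinuous_at tX m g x -> open tX G -> G x -> dense_in tX G A ->
  (forall x', G x' -> A x' -> dist m c (g x') <= r) -> dist m c (g x) <= r.
Proof.
  intros Hq HG Gx HA Hr; apply le_epsilon; intros e He.
  destruct (Hq G (fun w => dist m (g x) w < e)) as [O [HO [HOne [HOG HOe]]]].
  - exists G; split; [exact HG |]; split; [exact Gx | auto].
  - exists e; split; [exact He | auto].
  - destruct (HA O HO HOG HOne) as [x' [Ox' Ax']].
    pose proof (Hr x' (HOG x' Ox') Ax').
    pose proof (HOe x' Ox').
    pose proof (dist_tri m c (g x') (g x)).
    rewrite (dist_sym m (g x') (g x)) in *; lra.
Qed.

Section QuasicontinuityInY.
Variables (X Y Z : Type) (tX : topology X) (tY : topology Y) (m : metric Z).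
Variables (f : X -> Y -> Z) (b : Y).

Lemma quasicontinuous_wrt_y_of_dense_baire (Q : X -> Prop) :
  countable_nbhd_base tY b ->
  (forall y, quasicontinuous tX m (fun x => f x y)) ->
  dense tX Q -> baire (subspace tX Q) ->
  (forall x, Q x -> continuous_at tY m (f x) b) ->
  forall a, quasicontinuous_wrt_y tX tY m f a b.
Proof.
  intros [B [HBn HB]] Hq HQ HbQ Hc a U eps HU Heps.
  set (e := eps / 2); assert (He : 0 < e) by (unfold e; lra).
  destruct (Hq b a U (fun w => dist m (f a b) w < e) HU)
    as [O1 [HO1 [HO1ne [HO1U HO1e]]]].
  { exists e; split; [exact He | auto]. }
  set (A := fun n x => forall y, B n y -> dist m (f x b) (f x y) <= e).
  assert (HA : forall x, Q x -> O1 x -> exists n, A n x).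
  { intros x Qx _.
    destruct (Hc x Qx (fun w => dist m (f x b) w < e)) as [V [HV HVe]].
    { exists e; split; [exact He | auto]. }
    destruct (HB V HV) as [n Hn].
    exists n; intros y By; left; exact (HVe y (Hn y By)). }
  destruct (baire_subspace_cover_somewhere_dense O1 A HQ HbQ HO1 HO1ne HA)
    as [n [G [HG [HGne [HGO1 HGA]]]]].
  exists (B n), G; split; [apply HBn |]; split; [exact HG |]; split; [exact HGne |].
  split; [intros x Gx; apply HO1U, HGO1, Gx |].
  intros x y Gx By.
  apply (quasicontinuous_at_dist_le (f a b) (Hq y x) HG Gx HGA).
  intros x' Gx' Ax'.
  pose proof (HO1e x' (HGO1 x' Gx')).
  pose proof (Ax' y By).
  pose proof (dist_tri m (f a b) (f x' b) (f x' y)).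
  unfold e in *; lra.
Qed.

(* [oscillation_le r] is written as a union of open sets so that [open_union]
   applies to it literally. *)
Definition oscillation_le (r : R) (x : X) : Prop :=
  exists O, (open tX O /\ exists V, nbhd tY b V /\
    forall x1 x2 y1 y2, O x1 -> O x2 -> V y1 -> V y2 ->
      dist m (f x1 y1) (f x2 y2) <= r) /\ O x.

Lemma oscillation_le_open (r : R) : open tX (oscillation_le r).
Proof. apply open_union; intros O [HO _]; exact HO. Qed.

Lemma oscillation_le_dense (r : R) :
  0 < r -> (forall a, quasicontinuous_wrt_y tX tY m f a b) ->
  dense tX (oscillation_le r).
Proof.
  intros Hr Hqy U HU [a Ua].
  destruct (Hqy a U (r / 2)) as [V [O [HV [HO [[x Ox] [HOU Hd]]]]]].
  - exists U; split; [exact HU | split; [exact Ua | auto]].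
  - lra.
  - exists x; split; [exact (HOU x Ox) |].
    exists O; split; [| exact Ox]; split; [exact HO |].
    exists V; split; [exact HV |].
    intros x1 x2 y1 y2 Ox1 Ox2 Vy1 Vy2.
    pose proof (Hd x1 y1 Ox1 Vy1).
    pose proof (Hd x2 y2 Ox2 Vy2).
    pose proof (dist_tri m (f x1 y1) (f a b) (f x2 y2)).
    rewrite (dist_sym m (f x1 y1) (f a b)) in *; lra.
Qed.

Lemma continuous_at2_of_oscillation_le (x : X) :
  (forall k, oscillation_le (/ INR (S k)) x) -> continuous_at2 tX tY m f x b.
Proof.
  intros Hosc W [eps [Heps HW]].
  destruct (archimed_cor1 eps Heps) as [[| k] [Hk Hk0]]; [now apply Nat.lt_irrefl in Hk0 |].
  destruct (Hosc k) as [O [[HO [V [HV Hd]]] Ox]].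
  exists O, V; split; [exists O; split; [exact HO | split; [exact Ox | auto]] |].
  split; [exact HV |].
  intros x' y Ox' Vy; apply HW.
  assert (Vb : V b) by (destruct HV as [V' [_ [V'b HV']]]; auto).
  pose proof (Hd x x' b y Ox Ox' Vb Vy); lra.
Qed.

Lemma residual_continuous_at2 :
  (forall a, quasicontinuous_wrt_y tX tY m f a b) ->
  residual tX (fun x => continuous_at2 tX tY m f x b).
Proof.
  intros Hqy.
  exists (fun k => oscillation_le (/ INR (S k))).
  split; [intro k; apply oscillation_le_open |].
  split; [| exact continuous_at2_of_oscillation_le].
  intro k; apply oscillation_le_dense; [| exact Hqy].
  apply Rinv_0_lt_compat, lt_0_INR, Nat.lt_0_succ.
Qed.

End QuasicontinuityInY.

Theorem theorem4p4 (X Y Z : Type) (tX : topology X) (tY : topology Y)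
  (m : metric Z) (f : X -> Y -> Z) (b : Y) (Q : X -> Prop) :
  baire tX ->
  countable_nbhd_base tY b ->
  (forall y, quasicontinuous tX m (fun x => f x y)) ->
  dense tX Q ->
  baire (subspace tX Q) ->
  (forall x, Q x -> continuous_at tY m (f x) b) ->
  (forall a, quasicontinuous_wrt_y tX tY m f a b) /\
  residual tX (fun x => continuous_at2 tX tY m f x b).
Proof.
  intros _ HB Hq HQ HbQ Hc.
  pose proof (quasicontinuous_wrt_y_of_dense_baire f HB Hq HQ HbQ Hc) as Hqy.
  split; [exact Hqy | exact (residual_continuous_at2 Hqy)].
Qed.
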